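(* Let $M$ and $G$ be non-archimedean topological groups and let $f\colon M\to G$ be a continuous homomorphism. Then $f$ is an epimorphism in the category $\mathbf{NA}$ if and only if $f(M)$ is dense in $G$.
   Context: All topological groups are Hausdorff. A topological group is non-archimedean if it has a local base at the identity consisting of open subgroups; $\mathbf{NA}$ denotes the category whose objects are the non-archimedean (Hausdorff) topological groups and whose morphisms are the continuous homomorphisms. A morphism $f\colon M\to G$ in $\mathbf{NA}$ is an epimorphism in $\mathbf{NA}$ if there is no pair of distinct morphisms $g,h\colon G\to P$ in $\mathbf{NA}$ with $g\circ f=h\circ f$. *)

From HB Require Import structures.
From mathcomp Require Import all_boot all_order all_algebra.
From mathcomp Require Import all_classical all_reals all_analysis.
Set Implicit Arguments.
Unset Strict Implicit.
Unset Printing Implicit Defensive.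
Local Open Scope classical_set_scope.

Definition open_subgroup (T : topologicalType) (mul : T -> T -> T)
    (inv : T -> T) (one : T) (H : set T) : Prop :=
  [/\ open H, H one,
      (forall x y, H x -> H y -> H (mul x y)) &
      (forall x, H x -> H (inv x))].

Record NAGroup := {
  na_carrier :> topologicalType;
  na_mul : na_carrier -> na_carrier -> na_carrier;
  na_inv : na_carrier -> na_carrier;
  na_one : na_carrier;
  na_mulA : forall x y z, na_mul x (na_mul y z) = na_mul (na_mul x y) z;
  na_mul1g : forall x, na_mul na_one x = x;
  na_mulg1 : forall x, na_mul x na_one = x;
  na_mulVg : forall x, na_mul (na_inv x) x = na_one;
  na_mulgV : forall x, na_mul x (na_inv x) = na_one;
  na_mul_cont : continuous (fun p : na_carrier * na_carrier => na_mul p.1 p.2);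
  na_inv_cont : continuous na_inv;
  na_hausdorff : hausdorff_space na_carrier;
  na_nonarch : forall U : set na_carrier, nbhs na_one U ->
     exists H : set na_carrier,
       open_subgroup na_mul na_inv na_one H /\ H `<=` U
}.

Definition NA_hom (M G : NAGroup) (f : M -> G) : Prop :=
  continuous f /\ forall x y, f (na_mul x y) = na_mul (f x) (f y).

Definition NA_epi (M G : NAGroup) (f : M -> G) : Prop :=
  forall (P : NAGroup) (g h : G -> P), NA_hom g -> NA_hom h ->
    (forall x, g (f x) = h (f x)) -> g = h.

From HB Require Import structures.
From Stdlib Require List.
From mathcomp Require Import all_boot all_order all_algebra.
From mathcomp Require Import all_classical all_reals all_analysis.
Local Open Scope classical_set_scope.

(* Two continuous maps into a Hausdorff space that agree on a dense set are
   equal, so a morphism with dense image is an epimorphism.  Conversely, if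
   f(M) is not dense, there are an open subgroup V of G and g in G such that
   the coset gV misses f(M).  G acts by left translation on the doubled coset
   space Y = G/V x bool; this is a continuous homomorphism into the symmetric
   group Sym(Y) with the topology of pointwise convergence, which is a
   non-archimedean group.  Conjugating it by the involution of Y that swaps
   the two copies of every coset of the form f(m)V gives a second continuous
   homomorphism.  Both agree on f(M), whose elements permute the cosets f(m)V,
   but they differ at g, since V = f(1)V is swapped whereas gV is not. *)

Declare Scope na_scope.
Local Notation "x * y" := (na_mul x y) : na_scope.
Local Notation "x ^-1" := (na_inv x) : na_scope.
Local Notation "1" := (na_one _) : na_scope.
Local Open Scope na_scope.

Record sym (Y : Type) := Sym {
  sym_fun :> Y -> Y;
  sym_invf : Y -> Y;
  sym_funK : cancel sym_fun sym_invf;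
  sym_invfK : cancel sym_invf sym_fun }.
Arguments Sym {Y sym_fun sym_invf}.
Arguments sym_fun {Y}.
Arguments sym_invf {Y}.
Arguments sym_funK {Y}.
Arguments sym_invfK {Y}.

Lemma sym_ext (Y : Type) (p q : sym Y) : p =1 q -> p = q.
Proof.
case: p q => f g fK gK [f' g' fK' gK'] /= /funext eqf; subst f'.
have eqg : g = g' by apply: funext => y; rewrite -{1}(gK' y) fK.
by subst g'; rewrite (Prop_irrelevance fK fK') (Prop_irrelevance gK gK').
Qed.

HB.instance Definition _ (Y : Type) := gen_eqMixin (sym Y).
HB.instance Definition _ (Y : Type) := gen_choiceMixin (sym Y).

Definition agree {Y : Type} (s : seq Y) (p : sym Y) : set (sym Y) :=
  [set q | forall y, List.In y s -> q y = p y].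

Definition pointwise_open {Y : Type} (U : set (sym Y)) :=
  forall p, U p -> exists s, agree s p `<=` U.

Lemma pointwise_openT (Y : Type) : pointwise_open [set: sym Y].
Proof. by move=> p _; exists [::]. Qed.

Lemma pointwise_openI (Y : Type) : setI_closed (@pointwise_open Y).
Proof.
move=> A B Aop Bop p [/Aop[s sA] /Bop[t tB]]; exists (s ++ t) => q qst.
by split; [apply: sA | apply: tB] => y yP; apply: qst; apply/List.in_app_iff; tauto.
Qed.

Lemma pointwise_openU (Y : Type) (I : Type) (F : I -> set (sym Y)) :
  (forall i, pointwise_open (F i)) -> pointwise_open (\bigcup_i F i).
Proof. by move=> Fop p [i _ /Fop[s sF]]; exists s => q /sF; exists i. Qed.

HB.instance Definition _ (Y : Type) := isOpenTopological.Build (sym Y)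
  (@pointwise_openT Y) (@pointwise_openI Y) (@pointwise_openU Y).

Section SymmetricGroup.
Variable Y : Type.
Implicit Types (p q : sym Y) (s : seq Y).

Lemma nbhs_symP p (A : set (sym Y)) : nbhs p A <-> exists s, agree s p `<=` A.
Proof.
split=> [[B [Bop Bp BA]]|[s sA]].
  by have [s sB] := Bop p Bp; exists s; apply: subset_trans BA.
exists (agree s p); split => // q qs; exists s => r rs y ys.
by rewrite rs // qs.
Qed.

Lemma sym_eval_near p y : \forall q \near p, sym_fun q y = p y.
Proof. by apply/nbhs_symP; exists [:: y] => q; apply; left. Qed.

Lemma continuous_sym (T : topologicalType) (F : T -> sym Y) :
  (forall t y, \forall u \near t, F u y = F t y) -> continuous F.
Proof.
move=> Fnear t A /nbhs_symP[s sA].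
suff : \forall u \near t, agree s (F t) (F u) by apply: filterS => u /sA.
elim: s {sA} => [|y s IH]; first by apply: nearW => u z [].
by apply: filterS (filterI (Fnear t y) IH) => u [Fuy Fus] z [<-|/Fus].
Qed.

Definition sym_mul p q : sym Y :=
  Sym (can_comp (sym_funK p) (sym_funK q)) (can_comp (sym_invfK q) (sym_invfK p)).
Definition sym_inv p : sym Y := Sym (sym_invfK p) (sym_funK p).
Definition sym_one : sym Y := @Sym Y id id (fun _ => erefl) (fun _ => erefl).

Lemma sym_mul_continuous : continuous (fun pq : sym Y * sym Y => sym_mul pq.1 pq.2).
Proof.
apply: continuous_sym => -[p q] y.
exists ([set p' : sym Y | p' (q y) = p (q y)], [set q' : sym Y | q' y = q y]).
  by split; exact: sym_eval_near.
by move=> [p' q'] /= [p'E q'E]; rewrite q'E.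
Qed.

Lemma sym_inv_continuous : continuous sym_inv.
Proof.
apply: continuous_sym => p y; apply: filterS (sym_eval_near p (sym_invf p y)).
by move=> q /= qE; rewrite sym_invfK in qE; rewrite -{1}qE sym_funK.
Qed.

Lemma sym_hausdorff : hausdorff_space (sym Y).
Proof.
move=> p q pq; apply: sym_ext => y.
by have [r [/= <- ->]] := pq _ _ (sym_eval_near p y) (sym_eval_near q y).
Qed.

Lemma sym_nonarch (U : set (sym Y)) : nbhs sym_one U ->
  exists H, open_subgroup sym_mul sym_inv sym_one H /\ H `<=` U.
Proof.
move=> /nbhs_symP[s sU]; exists (agree s sym_one); split => //; split => //.
- by move=> p ps; exists s => q qs y ys; rewrite qs // ps.
- by move=> p q ps qs y ys /=; rewrite qs // ps.
- by move=> p ps y /ps /= pyy; rewrite -{1}pyy sym_funK.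
Qed.

Definition symNA : NAGroup.
refine (@Build_NAGroup (sym Y) sym_mul sym_inv sym_one _ _ _ _ _
  sym_mul_continuous sym_inv_continuous sym_hausdorff sym_nonarch).
all: by move=> *; apply: sym_ext => y /=; rewrite ?sym_funK ?sym_invfK.
Defined.

End SymmetricGroup.

Section NAGroupTheory.
Context {G : NAGroup}.
Implicit Types x y c : G.

Lemma na_mulKg x y : x^-1 * (x * y) = y.
Proof. by rewrite na_mulA na_mulVg na_mul1g. Qed.

Lemma na_mulKVg x y : x * (x^-1 * y) = y.
Proof. by rewrite na_mulA na_mulgV na_mul1g. Qed.

Lemma na_invg1 : 1^-1 = 1 :> G.
Proof. by rewrite -[LHS]na_mulg1 na_mulVg. Qed.

Lemma na_invMg x y : (x * y)^-1 = y^-1 * x^-1.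
Proof.
have e : (x * y) * (y^-1 * x^-1) = 1 by rewrite -na_mulA na_mulKVg na_mulgV.
by rewrite -[LHS]na_mulg1 -e na_mulKg.
Qed.

Lemma na_mull_continuous c : continuous (na_mul c).
Proof.
move=> x W /(@na_mul_cont G (c, x))[[U U'] /= [Uc U'x] UU'].
apply: filterS U'x => z U'z; apply: (UU' (c, z)).
by split=> //; exact: nbhs_singleton.
Qed.

Lemma na_mulr_continuous c : continuous (fun x => x * c).
Proof.
move=> x W /(@na_mul_cont G (x, c))[[U U'] /= [Ux U'c] UU'].
apply: filterS Ux => z Uz; apply: (UU' (z, c)).
by split=> //; exact: nbhs_singleton.
Qed.

Lemma NA_hom_conj c : NA_hom (fun x => c * x * c^-1).
Proof.
split=> [x|x y].
  exact: continuous_comp (na_mull_continuous c x) (na_mulr_continuous _ _).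
by rewrite !na_mulA -(na_mulA _ c^-1 c) na_mulVg na_mulg1.
Qed.

End NAGroupTheory.

Lemma NA_hom_comp (A B C : NAGroup) (g : B -> C) (h : A -> B) :
  NA_hom g -> NA_hom h -> NA_hom (g \o h).
Proof.
move=> [gc gM] [hc hM]; split=> [x|x y /=]; last by rewrite hM gM.
exact: continuous_comp (hc x) (gc (h x)).
Qed.

Section Homomorphisms.
Context {A B : NAGroup} {f : A -> B}.
Hypothesis fM : {morph f : x y / x * y}.

Lemma na_hom1 : f 1 = 1.
Proof. by rewrite -[RHS](na_mulVg (f 1)) -{3}(na_mul1g 1) fM na_mulKg. Qed.

Lemma na_homV x : f x^-1 = (f x)^-1.
Proof.
by rewrite -[LHS]na_mul1g -(na_mulVg (f x)) -na_mulA -fM na_mulgV na_hom1 na_mulg1.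
Qed.

End Homomorphisms.

Section PermutationRepresentation.
Context {G : NAGroup} {Y : Type} {act : G -> Y -> Y}.
Hypothesis act1 : forall y, act 1 y = y.
Hypothesis actM : forall g h y, act (g * h) y = act g (act h y).

Lemma actK g : cancel (act g) (act g^-1).
Proof. by move=> y; rewrite -actM na_mulVg act1. Qed.

Lemma actKV g : cancel (act g^-1) (act g).
Proof. by move=> y; rewrite -actM na_mulgV act1. Qed.

Definition act_sym g : symNA Y := Sym (actK g) (actKV g).

Lemma NA_hom_act_sym :
  (forall g y, \forall h \near g, act h y = act g y) -> NA_hom act_sym.
Proof.
move=> act_near; split; first exact: continuous_sym.
by move=> g h; apply: sym_ext => y; exact: actM.
Qed.

End PermutationRepresentation.

Section CosetSpace.
Context {G : NAGroup} (V : set G).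
Hypothesis V_subgroup : open_subgroup (@na_mul G) (@na_inv G) 1 V.
Implicit Types (g h x : G) (S : set G).

Definition lcoset x : set G := [set y | V (x^-1 * y)].
Definition translate g S : set G := [set y | S (g^-1 * y)].

Lemma translate1 S : translate 1 S = S.
Proof. by apply: funext => y; rewrite /translate /= na_invg1 na_mul1g. Qed.

Lemma translateM g h S : translate (g * h) S = translate g (translate h S).
Proof. by apply: funext => y; rewrite /translate /= na_invMg na_mulA. Qed.

Lemma translate_lcoset g x : translate g (lcoset x) = lcoset (g * x).
Proof. by apply: funext => y; rewrite /translate /lcoset /= na_invMg na_mulA. Qed.

Lemma lcoset_id x : lcoset x x.
Proof. by case: V_subgroup => _ V1 _ _; rewrite /lcoset /= na_mulVg. Qed.

Lemma lcoset_eq x z : V (x^-1 * z) -> lcoset z = lcoset x.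
Proof.
case: V_subgroup => _ _ VM VV Vxz; apply: funext => y; apply: propext.
rewrite /lcoset /=; split=> [Vzy|Vxy].
  by have := VM _ _ Vxz Vzy; rewrite -na_mulA na_mulKVg.
by have := VM _ _ (VV _ Vxz) Vxy; rewrite na_invMg -na_mulA na_mulKg.
Qed.

Definition lcosets := {S : set G | exists x, S = lcoset x}.

Definition lcoset_of x : lcosets := exist _ (lcoset x) (ex_intro _ x erefl).

Lemma translate_lcosetsP g (S : lcosets) : exists x, translate g (sval S) = lcoset x.
Proof. by case: S => _ [x /= ->]; exists (g * x); exact: translate_lcoset. Qed.

Definition lcosets_act g (S : lcosets) : lcosets :=
  exist _ (translate g (sval S)) (translate_lcosetsP g S).

Lemma lcosets_act1 (S : lcosets) : lcosets_act 1 S = S.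
Proof. by case: S => S SP; apply: eq_exist; exact: translate1. Qed.

Lemma lcosets_actM g h (S : lcosets) :
  lcosets_act (g * h) S = lcosets_act g (lcosets_act h S).
Proof. by apply: eq_exist; exact: translateM. Qed.

(* hxV = gxV for every h in the open set gxVx^-1. *)
Lemma lcosets_act_near g (S : lcosets) :
  \forall h \near g, lcosets_act h S = lcosets_act g S.
Proof.
case: S => S [x eS].
have : \forall h \near g, V ((g * x)^-1 * (h * x)).
  apply: (na_mulr_continuous x g [set z | V ((g * x)^-1 * z)]).
  apply: (na_mull_continuous (g * x)^-1 (g * x)); rewrite na_mulVg.
  by case: V_subgroup => Vop V1 _ _; exact: open_nbhs_nbhs.
apply: filterS => h Vh; apply: eq_exist; rewrite /= eS !translate_lcoset.
exact: lcoset_eq.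
Qed.

End CosetSpace.
Arguments lcosets_act {G V}.
Arguments lcoset_id {G V}.
Arguments lcosets_act_near {G V}.

Section SeparatingHomomorphisms.
Context {M G : NAGroup} {f : M -> G} {V : set G}.
Hypothesis fM : {morph f : x y / x * y}.
Hypothesis V_subgroup : open_subgroup (@na_mul G) (@na_inv G) 1 V.

Local Notation Y := (lcosets V * bool)%type.

Definition coset_act (g : G) (y : Y) : Y := (lcosets_act g y.1, y.2).

Lemma coset_act1 y : coset_act 1 y = y.
Proof. by case: y => S b; rewrite /coset_act lcosets_act1. Qed.

Lemma coset_actM g h y : coset_act (g * h) y = coset_act g (coset_act h y).
Proof. by rewrite /coset_act lcosets_actM. Qed.

Definition coset_rep : G -> symNA Y := act_sym coset_act1 coset_actM.

Lemma NA_hom_coset_rep : NA_hom coset_rep.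
Proof.
apply: NA_hom_act_sym => g y.
by apply: filterS (lcosets_act_near V_subgroup g y.1) => h; rewrite /coset_act => ->.
Qed.

Definition range_coset (S : lcosets V) := exists m, sval S = lcoset V (f m).

Lemma range_coset_act m S : range_coset (lcosets_act (f m) S) <-> range_coset S.
Proof.
rewrite /range_coset /=; split=> [[m' eS]|[m' ->]].
  exists (m^-1 * m'); rewrite fM (na_homV fM) -translate_lcoset -eS.
  by rewrite -translateM na_mulVg translate1.
by exists (m * m'); rewrite translate_lcoset fM.
Qed.

Definition range_swap (y : Y) : Y := (y.1, `[< range_coset y.1 >] (+) y.2).

Lemma range_swapK : involutive range_swap.
Proof. by case=> S b; rewrite /range_swap /= addKb. Qed.

Definition range_swap_sym : symNA Y := Sym range_swapK range_swapK.

Lemma range_swap_coset_act m y :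
  range_swap (coset_act (f m) y) = coset_act (f m) (range_swap y).
Proof.
case: y => S b; rewrite /range_swap /coset_act /=.
by have /propext -> := range_coset_act m S.
Qed.

Definition twisted_rep : G -> symNA Y :=
  (fun p => range_swap_sym * p * range_swap_sym^-1) \o coset_rep.

Lemma NA_hom_twisted_rep : NA_hom twisted_rep.
Proof. by apply: NA_hom_comp; [exact: NA_hom_conj | exact: NA_hom_coset_rep]. Qed.

Lemma twisted_rep_range m : twisted_rep (f m) = coset_rep (f m).
Proof.
apply: sym_ext => y.
change (range_swap (coset_act (f m) (range_swap y)) = coset_act (f m) y).
by rewrite range_swap_coset_act range_swapK.
Qed.

Lemma twisted_rep_neq g :
  ~ range_coset (lcosets_act g (lcoset_of V 1)) -> twisted_rep g <> coset_rep g.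
Proof.
move=> gV_not_range /(congr1 (fun p : symNA Y => (p (lcoset_of V 1, false)).2)).
have V_range : range_coset (lcoset_of V 1) by exists 1; rewrite (na_hom1 fM).
change (`[< range_coset (lcosets_act g (lcoset_of V 1)) >]
        (+) (`[< range_coset (lcoset_of V 1) >] (+) false) = false -> False).
by rewrite (asboolT V_range) (asboolF gV_not_range).
Qed.

Lemma exists_separating_homs g : ~ (exists m, V (g^-1 * f m)) ->
  exists (P : NAGroup) (h1 h2 : G -> P),
    [/\ NA_hom h1, NA_hom h2, forall m, h1 (f m) = h2 (f m) & h1 g <> h2 g].
Proof.
move=> gV_not_range; exists (symNA Y), twisted_rep, coset_rep; split.
- exact: NA_hom_twisted_rep.
- exact: NA_hom_coset_rep.
- exact: twisted_rep_range.
apply: twisted_rep_neq => -[m /= gVfm]; apply: gV_not_range; exists m.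
by move: (lcoset_id V_subgroup (f m)); rewrite -gVfm translate_lcoset na_mulg1.
Qed.

End SeparatingHomomorphisms.

Lemma continuous_eq_dense {T U : topologicalType} {g h : T -> U} {D : set T} :
  hausdorff_space U -> continuous g -> continuous h -> dense D ->
  (forall x, D x -> g x = h x) -> g = h.
Proof.
move=> U_hausdorff gc hc D_dense ghD; apply: funext => x.
apply: U_hausdorff => A B /gc gA /hc hB.
have : nbhs x (g @^-1` A `&` h @^-1` B) by exact: filterI.
rewrite nbhsE => -[W [Wop Wx] WAB].
have [z [Wz Dz]] := D_dense W (ex_intro _ x Wx) Wop.
have [gzA hzB] := WAB z Wz.
by exists (g z); split; rewrite // ghD.
Qed.

Lemma dense_NA_epi (M G : NAGroup) (f : M -> G) : dense (range f) -> NA_epi f.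
Proof.
move=> f_dense P g h [gc _] [hc _] ghf.
apply: (continuous_eq_dense (@na_hausdorff P) gc hc f_dense).
by move=> _ [m _ <-].
Qed.

Lemma NA_epi_dense (M G : NAGroup) (f : M -> G) :
  NA_hom f -> NA_epi f -> dense (range f).
Proof.
move=> [_ fM] f_epi; apply: contrapT => /denseNE[W [[g [Wop Wg]] W_range]].
have gW : \forall v \near (1 : G), W (g * v).
  by apply: (na_mull_continuous g 1); rewrite na_mulg1; exact: open_nbhs_nbhs.
have [V [V_subgroup VgW]] := na_nonarch gW.
have gV_disjoint : ~ exists m, V (g^-1 * f m).
  move=> [m /VgW]; rewrite na_mulKVg => Wfm.
  suff : (W `&` range f) (f m) by rewrite W_range.
  by split; last exists m.
have [P [h1 [h2 [h1_hom h2_hom h12f h12g]]]] :=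
  exists_separating_homs fM V_subgroup g gV_disjoint.
by apply: h12g; rewrite (f_epi P h1 h2 h1_hom h2_hom h12f).
Qed.

Theorem theorem7p9 (M G : NAGroup) (f : M -> G) :
  NA_hom f -> (NA_epi f <-> dense (range f)).
Proof.
by move=> f_hom; split; [exact: NA_epi_dense | exact: dense_NA_epi].
Qed.
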